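(* Let $a$ be a positive real number. For $n\ge1$ let $D_n(a,1)$ be the $n\times n$ matrix whose $(i,j)$ entry is $-a$ if $i=j$, $1$ if $j=i+1$, $a$ if $i=j+1$, $-1$ if $i=j+2$, and $0$ otherwise; set $d_{-1}=0$, $d_0=1$ and $d_n=|D_n(a,1)|$ for $n\ge1$. Let $E_n(a,1)$ be the $(n+1)\times n$ matrix whose $(i,j)$ entry is $-a$ if $i=j$, $1$ if $j=i+1$, $a$ if $i=j+1$, $-1$ if $i=j+2$, and $0$ otherwise, and for $1\le k\le n+1$ let $E_n^k(a,1)$ be obtained from $E_n(a,1)$ by deleting its $k$-th row. Then for $1\le k\le n+1$, $$|E_n^k(a,1)|=(-1)^{n-k+1}(d_{k-1}d_{n-k+1}-d_{k-2}d_{n-k}),$$ and for every $k\ge0$, $$d_k=\frac{1}{k!}\frac{d^k}{dx^k}\left(\frac{1}{1+ax+ax^2+x^3}\right)\Big|_{x=0}.$$ Moreover, if $x^3+ax^2+ax+1=0$ has three distinct (complex) solutions $\alpha,\beta,\gamma$, then for $k\ge1$ $$d_k=\frac{1}{\alpha^{k+1}(\alpha-\beta)(\gamma-\alpha)}+\frac{1}{\beta^{k+1}(\alpha-\beta)(\beta-\gamma)}+\frac{1}{\gamma^{k+1}(\gamma-\alpha)(\beta-\gamma)}.$$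
   Context: $|M|$ denotes the determinant of a square matrix $M$. *)

From HB Require Import structures.
From mathcomp Require Import all_boot all_order all_algebra.
From mathcomp Require Import all_classical all_reals all_analysis.
From mathcomp Require Import complex.
Set Implicit Arguments. Unset Strict Implicit. Unset Printing Implicit Defensive.
Import Order.TTheory GRing.Theory Num.Theory.
Local Open Scope ring_scope.

(* Entry pattern shared by D_n(a,1) and E_n(a,1); indices are 0-based here,
   which does not matter since only index differences are involved. *)
Definition ent {R : ringType} (a : R) (i j : nat) : R :=
  if i == j then - a
  else if j == i.+1 then 1
  else if i == j.+1 then a
  else if i == j.+2 then -1
  else 0.

Definition Dmat {R : ringType} (a : R) (n : nat) : 'M[R]_n :=
  \matrix_(i < n, j < n) ent a i j.

Definition Emat {R : ringType} (a : R) (n : nat) : 'M[R]_(n.+1, n) :=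
  \matrix_(i < n.+1, j < n) ent a i j.

(* E_n^k(a,1), k 1-based (1 <= k <= n+1): delete the k-th row *)
Definition Ekmat {R : ringType} (a : R) (n k : nat) : 'M[R]_n :=
  row' (inord k.-1 : 'I_n.+1) (Emat a n).

Definition dd {R : comRingType} (a : R) (m : int) : R :=
  match m with
  | Posz 0 => 1
  | Posz n => \det (Dmat a n)
  | Negz _ => 0
  end.

(* Deleting the k-th row of E_n(a,1) leaves a matrix which is block triangular
   up to two corner entries, with diagonal blocks D_{k-1}(a,1) and the row-shifted
   band matrix -D_{n-k+1}(a,1)^T; expanding along the corner entry gives the first
   formula. Expanding d_{n+2} along its last column and using the first formula
   yields d_{n+2} + a d_{n+1} + a d_n + d_{n-1} = 0, i.e. (d_k) is the coefficient
   sequence of the power series 1/p with p = 1 + a x + a x^2 + x^3, and such a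
   sequence is unique. The Taylor coefficients of 1/p at 0 have this property by
   the Leibniz rule applied to p * (1/p) = 1. So does the partial-fraction sequence:
   p is palindromic, so inverses of roots are roots, and its initial values are
   Lagrange interpolation identities. *)

From HB Require Import structures.
From mathcomp Require Import all_boot all_order all_algebra.
From mathcomp Require Import all_classical all_reals all_analysis.
From mathcomp Require Import complex.
From mathcomp Require Import zify ring.
Set Implicit Arguments. Unset Strict Implicit. Unset Printing Implicit Defensive.
Import Order.TTheory GRing.Theory Num.Theory.
Import numFieldNormedType.Exports.
Local Open Scope classical_set_scope.
Local Open Scope ring_scope.

Section Determinants.
Variable R : comNzRingType.

Lemma signr_addnn n : (-1) ^+ (n + n) = 1 :> R.
Proof. by rewrite -signr_odd addnn odd_double. Qed.

Lemma signr_addnS n : (-1) ^+ (n + n.+1) = -1 :> R.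
Proof. by rewrite addnS exprS signr_addnn mulr1. Qed.

Lemma det_add_delta n (A : 'M[R]_n) i j c :
  \det (A + c *: delta_mx i j) = \det A + c * cofactor A i j.
Proof.
have cofE k : cofactor (A + c *: delta_mx i j) i k = cofactor A i k.
  rewrite /cofactor; congr (_ * \det _); apply/matrixP => x y.
  by rewrite !mxE eq_sym (negbTE (neq_lift i x)) mulr0 addr0.
rewrite !(expand_det_row _ i) (bigD1 j) //= [in RHS](bigD1 j) //= cofE.
rewrite !mxE !eqxx mulr1 mulrDl -!addrA; congr (_ + _); rewrite addrC; congr (_ + _).
by apply: eq_bigr => k /negbTE jk; rewrite cofE !mxE jk andbF mulr0 addr0.
Qed.

Definition sqmx n (f : nat -> nat -> R) : 'M[R]_n := \matrix_(i < n, j < n) f i j.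

Lemma eq_sqmx n f g :
  (forall i j, (i < n)%N -> (j < n)%N -> f i j = g i j) -> sqmx n f = sqmx n g.
Proof. by move=> fg; apply/matrixP => i j; rewrite !mxE fg. Qed.

Lemma minor_sqmx n f (i j : 'I_n.+1) :
  row' i (col' j (sqmx n.+1 f)) = sqmx n (fun x y => f (bump i x) (bump j y)).
Proof. by apply/matrixP => x y; rewrite !mxE. Qed.

Lemma det_sqmx1 f : \det (sqmx 1 f) = f 0%N 0%N.
Proof. by rewrite det_mx11 mxE. Qed.

Lemma det_sqmx_lblock r s f :
  (forall i j, (i < r <= j)%N -> (j < r + s)%N -> f i j = 0) ->
  \det (sqmx (r + s) f) =
  \det (sqmx r f) * \det (sqmx s (fun i j => f (r + i)%N (r + j)%N)).
Proof.
move=> f0; rewrite -[sqmx _ f]submxK (_ : ursubmx _ = 0) ?det_lblock.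
  by congr (_ * _); congr (\det _); apply/matrixP => i j; rewrite !mxE.
apply/matrixP => i j; rewrite !mxE /= f0 //; have := ltn_ord i; have := ltn_ord j; lia.
Qed.

Lemma det_sqmx_ublock r s f :
  (forall i j, (j < r <= i)%N -> (i < r + s)%N -> f i j = 0) ->
  \det (sqmx (r + s) f) =
  \det (sqmx r f) * \det (sqmx s (fun i j => f (r + i)%N (r + j)%N)).
Proof.
move=> f0; rewrite -[sqmx _ f]submxK (_ : dlsubmx _ = 0) ?det_ublock.
  by congr (_ * _); congr (\det _); apply/matrixP => i j; rewrite !mxE.
apply/matrixP => i j; rewrite !mxE /= f0 //; have := ltn_ord i; have := ltn_ord j; lia.
Qed.

Lemma det_sqmx_corner_coupling r s f :
  (forall i j, (i < r.+1 <= j)%N -> (j < r.+1 + s.+1)%N -> ((i < r) || (r.+1 < j))%N ->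
     f i j = 0) ->
  (forall i j, (j < r.+1 <= i)%N -> (i < r.+1 + s.+1)%N -> ((j < r) || (r.+1 < i))%N ->
     f i j = 0) ->
  \det (sqmx (r.+1 + s.+1) f) =
    \det (sqmx r.+1 f) * \det (sqmx s.+1 (fun i j => f (r.+1 + i)%N (r.+1 + j)%N))
  - f r r.+1 * f r.+1 r *
    (\det (sqmx r f) * \det (sqmx s (fun i j => f (r.+2 + i)%N (r.+2 + j)%N))).
Proof.
(* Without its corner entry [f r r.+1] the matrix is block lower triangular, and
   the cofactor of that entry is block upper triangular. *)
move=> up0 lo0.
have ltr : (r < r.+1 + s.+1)%N by lia.
have ltr1 : (r.+1 < r.+1 + s.+1)%N by lia.
pose f0 i j := if (i == r) && (j == r.+1) then 0 else f i j.
have -> : sqmx (r.+1 + s.+1) f =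
    sqmx _ f0 + f r r.+1 *: delta_mx (Ordinal ltr) (Ordinal ltr1).
  apply/matrixP => i j; rewrite !mxE /f0 /=.
  by case: andP => [[/eqP-> /eqP->]|_]; rewrite ?mulr1 ?mulr0 ?add0r ?addr0.
rewrite det_add_delta (det_sqmx_lblock (r := r.+1)); last first.
  move=> i j ? ?; rewrite /f0; case: ifP => // /negbT ne; apply: up0 => //; lia.
have -> : sqmx r.+1 f0 = sqmx r.+1 f.
  by apply: eq_sqmx => i j _ jr; rewrite /f0 ifN //; lia.
have -> : sqmx s.+1 (fun i j => f0 (r.+1 + i)%N (r.+1 + j)%N) =
          sqmx s.+1 (fun i j => f (r.+1 + i)%N (r.+1 + j)%N).
  by apply: eq_sqmx => i j _ _; rewrite /f0 ifN //; lia.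
have -> : cofactor (sqmx _ f0) (Ordinal ltr) (Ordinal ltr1) =
    - (f r.+1 r * (\det (sqmx r f) * \det (sqmx s (fun i j => f (r.+2 + i)%N (r.+2 + j)%N)))).
  rewrite /cofactor (minor_sqmx (n := r + s.+1)) /= (det_sqmx_ublock (r := r)); last first.
    by move=> i j ? ?; rewrite /f0 ifN; first apply: lo0; rewrite /bump; lia.
  have -> : sqmx r (fun i j => f0 (bump r i) (bump r.+1 j)) = sqmx r f.
    by apply: eq_sqmx => i j ? ?; rewrite /f0 ifN; first congr f; rewrite /bump; lia.
  rewrite (det_sqmx_ublock (r := 1) (s := s)) ?det_sqmx1; last first.
    by move=> i j ? ?; rewrite /f0 ifN; first apply: lo0; rewrite /bump; lia.
  have -> : sqmx s (fun i j => f0 (bump r (r + (1 + i))) (bump r.+1 (r + (1 + j)))) =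
            sqmx s (fun i j => f (r.+2 + i)%N (r.+2 + j)%N).
    by apply: eq_sqmx => i j ? ?; rewrite /f0 ifN; first congr f; rewrite /bump; lia.
  rewrite signr_addnS /f0 /bump addn0 leqnn (leqNgt r.+1 r) ltnSn /= add1n add0n ifN; last lia.
  ring.
ring.
Qed.
End Determinants.

Section BandMatrices.
Variables (R : comNzRingType) (a : R).

Lemma ent_eq0 i j : ((i.+1 < j) || (j.+2 < i))%N -> ent a i j = 0.
Proof. by move=> ij; rewrite /ent; do ![case: eqP => ?]; try lia. Qed.

Lemma ent_addn c i j : ent a (c + i) (c + j) = ent a i j.
Proof. by rewrite /ent -!addnS !eqn_add2l. Qed.

Lemma ent_succ_l i j : ent a i.+1 j = - ent a j i.
Proof. by rewrite /ent; do ![case: eqP => ?]; rewrite ?opprK ?oppr0 //; lia. Qed.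

Lemma ent_diag i : ent a i i = - a.
Proof. by rewrite /ent eqxx. Qed.

Lemma ent_super i : ent a i i.+1 = 1.
Proof. by rewrite /ent; do ![case: eqP => ?]; try lia. Qed.

Lemma ent_sub2 i : ent a i.+2 i = -1.
Proof. by rewrite /ent; do ![case: eqP => ?]; try lia. Qed.

Lemma dd_nat (n : nat) : dd a n = \det (Dmat a n).
Proof. by case: n => [|n] //; rewrite det_mx00. Qed.

Lemma det_sqmx_ent_succ n :
  \det (sqmx n (fun i j => ent a i.+1 j)) = (-1) ^+ n * \det (Dmat a n).
Proof.
have -> : sqmx n (fun i j => ent a i.+1 j) = - (Dmat a n)^T.
  by apply/matrixP => i j; rewrite !mxE ent_succ_l.
by rewrite -scaleN1r detZ det_tr.
Qed.

Lemma Ekmat_sqmx n r : (r <= n)%N ->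
  Ekmat a n r.+1 = sqmx n (fun i j => ent a (bump r i) j).
Proof. by move=> rn; apply/matrixP => i j; rewrite !mxE /= inordK. Qed.

Lemma cofactor_Dmat_last n (i : 'I_n.+1) :
  cofactor (Dmat a n.+1) i ord_max = (-1) ^+ (i + n) * \det (Ekmat a n i.+1).
Proof.
rewrite /cofactor /= /Ekmat inord_val; congr (_ * \det _).
by apply/matrixP => x y; rewrite !mxE /=; congr ent; rewrite /bump leqNgt ltn_ord.
Qed.

Lemma det_Ekmat r s :
  \det (Ekmat a (r + s) r.+1) =
  (-1) ^+ s * (dd a r * dd a s - dd a (r%:Z - 1) * dd a (s%:Z - 1)).
Proof.
rewrite Ekmat_sqmx ?leq_addr //; case: r => [|r].
  rewrite (eq_sqmx (g := fun i j => ent a i.+1 j)) // det_sqmx_ent_succ.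
  by rewrite -dd_nat mul1r mul0r subr0.
case: s => [|s].
  rewrite (eq_sqmx (g := ent a)); last by move=> i j ? _; rewrite /bump; congr ent; lia.
  by rewrite -dd_nat mulr1 mulr0 subr0 mul1r addn0.
rewrite det_sqmx_corner_coupling; first last.
- by move=> i j ? ? ?; apply: ent_eq0; rewrite /bump; lia.
- by move=> i j ? ? ?; apply: ent_eq0; rewrite /bump; lia.
rewrite (eq_sqmx (n := r.+1) (g := ent a)); last by move=> i j ? _; rewrite /bump; congr ent; lia.
rewrite (eq_sqmx (n := r) (g := ent a)); last by move=> i j ? _; rewrite /bump; congr ent; lia.
rewrite (eq_sqmx (n := s.+1) (g := fun i j => ent a i.+1 j)); last first.
  by move=> i j _ _; rewrite -[RHS](ent_addn r.+1) /bump; congr ent; lia.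
rewrite (eq_sqmx (n := s) (g := fun i j => ent a i.+1 j)); last first.
  by move=> i j _ _; rewrite -[RHS](ent_addn r.+2) /bump; congr ent; lia.
rewrite /bump leqnn (leqNgt r.+1 r) ltnSn add0n add1n ent_super ent_sub2.
rewrite !det_sqmx_ent_succ.
have -> : (r.+1%:Z - 1 = r%:Z)%R by lia.
have -> : (s.+1%:Z - 1 = s%:Z)%R by lia.
by rewrite -!dd_nat exprS; ring.
Qed.

Lemma det_Dmat_last_col n :
  \det (Dmat a n.+2) = - a * \det (Ekmat a n.+1 n.+2) - \det (Ekmat a n.+1 n.+1).
Proof.
rewrite (expand_det_col _ ord_max) !big_ord_recr big1 /=; last first.
  by move=> i _; rewrite !mxE ent_eq0 ?mul0r //= ltnS ltn_ord.
rewrite !cofactor_Dmat_last !mxE /= ent_super ent_diag signr_addnS signr_addnn.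
ring.
Qed.

Lemma dd1 : dd a 1 = - a.
Proof. by rewrite dd_nat det_mx11 mxE ent_diag. Qed.

Lemma dd_rec n : dd a n.+2 = - a * dd a n.+1 - a * dd a n - dd a (n%:Z - 1).
Proof.
rewrite [LHS]dd_nat det_Dmat_last_col.
have := det_Ekmat n.+1 0; rewrite addn0 => ->.
have := det_Ekmat n 1; rewrite addn1 => ->.
have -> : (n.+1%:Z - 1 = n%:Z)%R by lia.
rewrite sub0r subrr dd1 expr1 expr0 /=.
ring.
Qed.

Lemma det_Ekmat_dd n k : (1 <= k <= n.+1)%N ->
  \det (Ekmat a n k) =
  (-1) ^+ (n.+1 - k) *
    (dd a (k%:Z - 1) * dd a (n%:Z - k%:Z + 1) - dd a (k%:Z - 2) * dd a (n%:Z - k%:Z)).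
Proof.
case/andP=> k1 kn.
have [r kr] : exists r, k = r.+1 by exists k.-1; lia.
have [s ns] : exists s, n = (r + s)%N by exists (n - r)%N; lia.
subst k n; rewrite det_Ekmat.
have -> : ((r + s).+1 - r.+1 = s)%N by lia.
have -> : (r.+1%:Z - 1 = r)%R by lia.
have -> : ((r + s)%N%:Z - r.+1%:Z + 1 = s)%R by lia.
have -> : (r.+1%:Z - 2 = r%:Z - 1)%R by lia.
by have -> : ((r + s)%N%:Z - r.+1%:Z = s%:Z - 1)%R by lia.
Qed.

End BandMatrices.

Definition series_inverse {R : nzRingType} (p : {poly R}) (c : nat -> R) :=
  forall k, \sum_(j < k.+1) p`_j * c (k - j)%N = (k == 0%N)%:R.

Definition cubic {R : nzRingType} (a : R) : {poly R} := 1 + a *: 'X + a *: 'X^2 + 'X^3.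

Section SeriesInverse.
Variable R : comNzRingType.

Lemma series_inverse_unique (p : {poly R}) c c' : p`_0 = 1 ->
  series_inverse p c -> series_inverse p c' -> c =1 c'.
Proof.
move=> p0 pc pc' k; elim/ltn_ind: k => k IH.
have := pc k; rewrite -(pc' k) !big_ord_recl /= p0 !mul1r subn0.
rewrite (eq_bigr (fun j : 'I_k => p`_(bump 0 j) * c' (k - bump 0 j)%N)) => [|j _].
  exact: addIr.
by rewrite IH // /bump; case: k IH j => [|k] _ [j /= jk]; lia.
Qed.

Lemma series_inverse_map (S : comNzRingType) (f : {rmorphism R -> S}) (p : {poly R}) c :
  series_inverse p c -> series_inverse (map_poly f p) (f \o c).
Proof.
move=> pc k; rewrite -(rmorph_nat f) -pc rmorph_sum.
by apply: eq_bigr => j _; rewrite rmorphM coef_map.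
Qed.

Lemma horner_cubic (a x : R) : (cubic a).[x] = 1 + a * x + a * x ^+ 2 + x ^+ 3.
Proof. by rewrite !hornerE. Qed.

Lemma map_cubic (S : comNzRingType) (f : {rmorphism R -> S}) (a : R) :
  map_poly f (cubic a) = cubic (f a).
Proof. by rewrite /cubic !rmorphD /= rmorph1 !map_polyZ !map_polyXn map_polyX. Qed.

Lemma coef_cubic (a : R) m : (cubic a)`_m = [:: 1; a; a; 1]`_m.
Proof.
rewrite !coefE; case: m => [|[|[|[|m]]]] /=; rewrite ?nth_nil; ring.
Qed.

Lemma coef0_cubic (a : R) : (cubic a)`_0 = 1.
Proof. by rewrite coef_cubic. Qed.

Lemma series_inverse_cubic (a : R) c :
  c 0%N = 1 -> c 1%N + a * c 0%N = 0 -> c 2%N + a * c 1%N + a * c 0%N = 0 ->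
  (forall k, c k.+3 + a * c k.+2 + a * c k.+1 + c k = 0) ->
  series_inverse (cubic a) c.
Proof.
move=> c0 c1 c2 c3 [|[|[|k]]];
  rewrite !big_ord_recl ?big_ord0 /= /bump /= ?add1n ?subSS ?subn0 !coef_cubic /=.
- by rewrite c0; ring.
- by rewrite -[RHS]c1; ring.
- by rewrite -[RHS]c2; ring.
rewrite big1 => [|i _]; last by rewrite coef_cubic /= nth_nil mul0r.
by rewrite -[RHS](c3 k); ring.
Qed.

Lemma dd_series_inverse (a : R) : series_inverse (cubic a) (fun k => dd a k).
Proof.
apply: series_inverse_cubic => [//|||k].
- by rewrite dd1 mulr1 addNr.
- by rewrite dd_rec dd1 sub0r /=; ring.
by rewrite dd_rec (_ : (k.+1%:Z - 1 = k)%R); [ring | lia].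
Qed.

End SeriesInverse.

Section PartialFractions.
Variables (F : fieldType) (a : F).

Lemma cubic_root_inv x : x ^+ 3 + a * x ^+ 2 + a * x + 1 = 0 ->
  [/\ x^-1 = - (x ^+ 2 + a * x + a), x^-1 ^+ 2 + a * x^-1 = - (x + a)
    & x^-1 ^+ 3 + a * x^-1 ^+ 2 + a * x^-1 = -1].
Proof.
move=> px; have x0 : x != 0.
  by apply/eqP => x0; move: px; rewrite x0 !expr0n /= !mulr0 !add0r => /eqP; rewrite oner_eq0.
have vanish e k : e = (x ^+ 3 + a * x ^+ 2 + a * x + 1) / x ^+ k -> e = 0.
  by rewrite px mul0r.
split; apply/eqP; rewrite -subr_eq0; apply/eqP.
- by apply: (vanish _ 1); field.
- by apply: (vanish _ 2); field.
- by apply: (vanish _ 3); field.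
Qed.

Lemma lagrange_interp3 (x y z u v w : F) : x != y -> y != z -> x != z ->
  (u * x ^+ 2 + v * x + w) / ((x - y) * (z - x))
  + (u * y ^+ 2 + v * y + w) / ((x - y) * (y - z))
  + (u * z ^+ 2 + v * z + w) / ((z - x) * (y - z)) = - u.
Proof.
move=> xy yz xz; field.
by rewrite !subr_eq0 xy yz eq_sym xz.
Qed.

Lemma partial_fractions_series_inverse (x y z : F) : x != y -> y != z -> x != z ->
  x ^+ 3 + a * x ^+ 2 + a * x + 1 = 0 ->
  y ^+ 3 + a * y ^+ 2 + a * y + 1 = 0 ->
  z ^+ 3 + a * z ^+ 2 + a * z + 1 = 0 ->
  series_inverse (cubic a) (fun k =>
      (x ^+ k.+1 * (x - y) * (z - x))^-1
    + (y ^+ k.+1 * (x - y) * (y - z))^-1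
    + (z ^+ k.+1 * (z - x) * (y - z))^-1).
Proof.
move=> xy yz xz px py pz.
have [x1 x2 x3] := cubic_root_inv px.
have [y1 y2 y3] := cubic_root_inv py.
have [z1 z2 z3] := cubic_root_inv pz.
(* By [cubic_root_inv], the initial values are Lagrange interpolation sums of
   quadratic polynomials. *)
pose L (g : F -> F) := g x / ((x - y) * (z - x)) + g y / ((x - y) * (y - z))
                     + g z / ((z - x) * (y - z)).
have Lquad u v w : L (fun t => u * t ^+ 2 + v * t + w) = - u by exact: lagrange_interp3.
have Llin g h c : L g + c * L h = L (fun t => g t + c * h t) by rewrite /L; ring.
have -> : (fun k => (x ^+ k.+1 * (x - y) * (z - x))^-1
    + (y ^+ k.+1 * (x - y) * (y - z))^-1 + (z ^+ k.+1 * (z - x) * (y - z))^-1) =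
    (fun k => L (fun t => t^-1 ^+ k.+1)).
  by apply/funext => k; rewrite /L -!mulrA !invfM !exprVn.
apply: series_inverse_cubic => [|||k].
- by rewrite -[RHS]opprK -(Lquad (-1) (-a) (-a)) /L expr1 x1 y1 z1; ring.
- by rewrite Llin -[RHS]oppr0 -(Lquad 0 (-1) (-a)) /L expr1 x2 y2 z2; ring.
- by rewrite !Llin -[RHS]oppr0 -(Lquad 0 0 (-1)) /L expr1 x3 y3 z3; ring.
have rec t : t^-1 ^+ 3 + a * t^-1 ^+ 2 + a / t = -1 ->
    t^-1 ^+ k.+4 + a * t^-1 ^+ k.+3 + a * t^-1 ^+ k.+2 + t^-1 ^+ k.+1 = 0.
  move=> t3; transitivity (t^-1 ^+ k.+1 * (t^-1 ^+ 3 + a * t^-1 ^+ 2 + a / t + 1)).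
    by rewrite !exprS; ring.
  by rewrite t3 addNr mulr0.
transitivity (L (fun t => t^-1 ^+ k.+4 + a * t^-1 ^+ k.+3 + a * t^-1 ^+ k.+2 + t^-1 ^+ k.+1)).
  by rewrite /L; ring.
by rewrite /L !rec // !mul0r !addr0.
Qed.

End PartialFractions.

Lemma binomial_convolutionS (R : nzSemiRingType) (u v : nat -> R) n :
  \sum_(j < n.+2) 'C(n.+1, j)%:R * (u j * v (n.+1 - j)%N) =
  \sum_(j < n.+1) 'C(n, j)%:R * (u j.+1 * v (n - j)%N + u j * v (n - j).+1).
Proof.
under [RHS]eq_bigr => j _ do rewrite mulrDr.
rewrite big_ord_recl [RHS]big_split /=.
under eq_bigr => j _ do rewrite /bump /= add1n binS natrD subSS mulrDl.
rewrite big_split /= addrA addrC; congr (_ + _).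
rewrite big_ord_recr [RHS]big_ord_recl /= (bin_small (ltnSn n)) mul0r addr0 !bin0 !subn0.
congr (_ + _); apply: eq_bigr => j _.
by rewrite /bump /= ?add1n subnSK.
Qed.

Section DeriveOnOpen.
Variables (R : numFieldType) (U : set R).
Hypothesis oU : open U.

Let near_U x : U x -> \forall y \near x, U y.
Proof. by move=> Ux; apply: open_nbhs_nbhs. Qed.

Lemma derive1n_eq_on (f g : R -> R) : (forall x, U x -> f x = g x) ->
  forall n x, U x -> derive1n n f x = derive1n n g x.
Proof.
move=> fg; elim=> [|n IH] x Ux; first exact: fg.
rewrite !derive1nS !derive1E; apply: near_eq_derive.
by apply: filterS (near_U Ux) => y; exact: IH.
Qed.

Variables f g : R -> R.
Hypothesis df : forall n x, U x -> derivable (derive1n n f) x 1.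
Hypothesis dg : forall n x, U x -> derivable (derive1n n g) x 1.

Let is_derive1n (h : R -> R) n x : derivable (derive1n n h) x 1 ->
  is_derive x 1 (derive1n n h) (derive1n n.+1 h x).
Proof. by move=> /derivableP; rewrite derive1nS derive1E. Qed.

Lemma derive1n_mul n x : U x ->
  derive1n n (f * g) x =
  \sum_(j < n.+1) 'C(n, j)%:R * (derive1n j f x * derive1n (n - j) g x).
Proof.
elim: n x => [|n IH] x Ux; first by rewrite big_ord1 bin0 mul1r.
pose S := \sum_(j < n.+1) 'C(n, j)%:R *: (derive1n j f * derive1n (n - j) g).
have SE : \forall y \near x, derive1n n (f * g) y = S y.
  by apply: filterS (near_U Ux) => y Uy; rewrite IH // /S fct_sumE.
have dS : is_derive x 1 S (\sum_(j < n.+1) 'C(n, j)%:R *: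
    (derive1n j f x *: derive1n (n - j).+1 g x + derive1n (n - j) g x *: derive1n j.+1 f x)).
  by apply: is_derive_sum => j; apply/is_deriveZ/is_deriveM; apply: is_derive1n; auto.
rewrite derive1nS derive1E (near_eq_derive _ SE) (@derive_val _ _ _ _ _ _ _ dS).
rewrite (binomial_convolutionS (fun j => derive1n j f x) (fun j => derive1n j g x)).
apply: eq_bigr => j _; rewrite /GRing.scale /=; ring.
Qed.
End DeriveOnOpen.

Lemma derive1n_cst (R : numFieldType) (c : R) k x :
  derive1n k (cst c) x = if k is 0 then c else 0.
Proof.
have dcst (d : R) : derive1 (cst d) = cst 0 by apply/funext => y; rewrite derive1_cst.
case: k => [//|k]; rewrite derive1Sn dcst.
suff -> : derive1n k (cst 0 : R -> R) = cst 0 by [].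
by elim: k => [//|k IH]; rewrite derive1nS IH dcst.
Qed.

Lemma natr_fact_neq0 (R : numDomainType) k : (k`!%:R : R) != 0.
Proof. by rewrite pnatr_eq0 -lt0n fact_gt0. Qed.

Section ReciprocalPoly.
Variables (R : realFieldType) (p : {poly R}).

Lemma derive1n_horner n : derive1n n (horner p) = horner (p^`(n)).
Proof. by elim: n => [|n IH]; rewrite ?derivn0 // derive1nS IH -derivE derivnS. Qed.

Lemma open_horner_neq0 : open [set x | p.[x] != 0].
Proof.
apply: (@open_comp _ _ (horner p) [set y | y != 0]); last exact: open_neq.
by move=> x _; exact: continuous_horner.
Qed.

Fixpoint recip_numer n : {poly R} :=
  if n is m.+1 then deriv (recip_numer m) * p - m.+1%:R *: (recip_numer m * deriv p)
  else 1.

Lemma is_derive_ratio (q : {poly R}) n x : p.[x] != 0 ->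
  is_derive x 1 (fun y => q.[y] / p.[y] ^+ n.+1)
    ((deriv q * p - n.+1%:R *: (q * deriv p)).[x] / p.[x] ^+ n.+2).
Proof.
move=> px.
have dinv : is_derive x 1 (fun y => p.[y]^-1) (- p.[x] ^- 2 * (deriv p).[x]).
  apply: DeriveDef; first by apply: (derivableV px); exact: derivable_horner.
  by rewrite deriveV ?derive_val //; exact: derivable_horner.
have dM := is_deriveM (is_derive_poly q x) (is_deriveX n.+1 dinv).
have -> : (fun y => q.[y] / p.[y] ^+ n.+1) = horner q * (fun y => p.[y]^-1) ^+ n.+1.
  by apply/funext => y; rewrite mulrfctE exprfctE /= exprVn.
apply: (is_derive_eq dM).
rewrite hornerD hornerN hornerZ !hornerM exprfctE /GRing.scale /=.
move: p.[x] px => P P0; rewrite !exprS !exprVn; field.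
by rewrite P0 expf_neq0.
Qed.

Let near_neq0 x : p.[x] != 0 -> \forall y \near x, p.[y] != 0.
Proof. by move=> px; apply: open_nbhs_nbhs; split => //; exact: open_horner_neq0. Qed.

Lemma derive1n_recip n x : p.[x] != 0 ->
  derive1n n (fun y => p.[y]^-1) x = (recip_numer n).[x] / p.[x] ^+ n.+1.
Proof.
elim: n x => [|n IH] x px; first by rewrite /= hornerE mul1r expr1.
rewrite derive1nS derive1E.
rewrite (near_eq_derive (g := fun y => (recip_numer n).[y] / p.[y] ^+ n.+1)).
  by rewrite (@derive_val _ _ _ _ _ _ _ (is_derive_ratio _ n px)).
by apply: filterS (near_neq0 px) => y; exact: IH.
Qed.

Lemma derivable_derive1n_recip n x : p.[x] != 0 ->
  derivable (derive1n n (fun y => p.[y]^-1)) x 1.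
Proof.
move=> px; have dq := is_derive_ratio (recip_numer n) n px.
apply: (near_eq_derivable _ (@ex_derive _ _ _ _ _ _ _ dq)).
by apply: filterS (near_neq0 px) => y py; rewrite derive1n_recip.
Qed.

Lemma taylor_recip_series_inverse : p.[0] != 0 ->
  series_inverse p (fun k => k`!%:R^-1 * derive1n k (fun x => p.[x]^-1) 0).
Proof.
move=> p0 k; pose r x := p.[x]^-1.
have prod1 x : p.[x] != 0 -> (horner p * r) x = cst 1 x.
  by move=> px; rewrite mulrfctE /= mulfV.
have dp n x : p.[x] != 0 -> derivable (derive1n n (horner p)) x 1.
  by move=> _; rewrite derive1n_horner; exact: derivable_horner.
have dr n x : p.[x] != 0 -> derivable (derive1n n r) x 1 by exact: derivable_derive1n_recip.
have := derive1n_eq_on open_horner_neq0 prod1 k p0.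
rewrite (derive1n_mul open_horner_neq0 dp dr) // derive1n_cst => leib.
transitivity (k`!%:R^-1 *
  \sum_(j < k.+1) 'C(k, j)%:R * (derive1n j (horner p) 0 * derive1n (k - j) r 0)).
  rewrite mulr_sumr; apply: eq_bigr => j _.
  have jk : (j <= k)%N by rewrite -ltnS.
  rewrite derive1n_horner horner_coef0 coef_derivn addn0 ffactnn -mulr_natr.
  rewrite -(bin_fact jk) !natrM; field.
  by rewrite !natr_fact_neq0 pnatr_eq0 -lt0n bin_gt0 jk.
rewrite leib; case: k {leib} => [|k]; last by rewrite mulr0.
by rewrite fact0 mulr1 invr1.
Qed.
End ReciprocalPoly.

Theorem theorem2p3 (R : realType) (a : R) (ha : 0 < a) :
  (forall n k : nat, (1 <= n)%N -> (1 <= k <= n.+1)%N ->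
     \det (Ekmat a n k) =
     (-1) ^+ (n.+1 - k) *
       (dd a (k%:Z - 1) * dd a (n%:Z - k%:Z + 1)
        - dd a (k%:Z - 2) * dd a (n%:Z - k%:Z))) /\
  (forall k : nat,
     dd a k%:Z =
     (k`!%:R)^-1 *
       derive1n k (fun x : R => (1 + a * x + a * x ^+ 2 + x ^+ 3)^-1) 0) /\
  (forall alpha beta gamma : R[i],
     alpha != beta -> beta != gamma -> alpha != gamma ->
     alpha ^+ 3 + (a%:C)%C * alpha ^+ 2 + (a%:C)%C * alpha + 1 = 0 ->
     beta ^+ 3 + (a%:C)%C * beta ^+ 2 + (a%:C)%C * beta + 1 = 0 ->
     gamma ^+ 3 + (a%:C)%C * gamma ^+ 2 + (a%:C)%C * gamma + 1 = 0 ->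
     forall k : nat, (1 <= k)%N ->
       ((dd a k%:Z)%:C)%C =
         (alpha ^+ k.+1 * (alpha - beta) * (gamma - alpha))^-1
       + (beta ^+ k.+1 * (alpha - beta) * (beta - gamma))^-1
       + (gamma ^+ k.+1 * (gamma - alpha) * (beta - gamma))^-1).
Proof.
have dd_inv := dd_series_inverse a.
split; [by move=> n k _; exact: det_Ekmat_dd | split].
- have p0 : (cubic a).[0] != 0 by rewrite horner_coef0 coef0_cubic oner_neq0.
  have -> : (fun x : R => (1 + a * x + a * x ^+ 2 + x ^+ 3)^-1) = (fun x => (cubic a).[x]^-1).
    by apply/funext => x; rewrite horner_cubic.
  exact: series_inverse_unique (coef0_cubic a) dd_inv (taylor_recip_series_inverse p0).
move=> x y z xy yz xz px py pz k _.
have := series_inverse_map (real_complex R) dd_inv; rewrite map_cubic => dd_invC.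
exact: (series_inverse_unique (coef0_cubic _) dd_invC
         (partial_fractions_series_inverse xy yz xz px py pz)).
Qed.
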